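(* Let $M$ be a compact pointed metric space and assume that $\mathrm{lip}_0(M)$ is $1$-norming for $\mathcal F(M)$, so that $\mathcal F(M)$ is isometrically the dual of $\mathrm{lip}_0(M)$. Then $\mathcal F(M)$ is weak$^*$-asymptotically uniformly convex (with respect to the weak$^*$ topology $\sigma(\mathcal F(M),\mathrm{lip}_0(M))$).
   Context: A pointed metric space $M$ has a distinguished origin $0$. $\mathrm{Lip}_0(M)$ is the Banach space of real Lipschitz functions on $M$ vanishing at $0$ with the best Lipschitz constant as norm; $\delta(x)$ is evaluation at $x$, and the Lipschitz free space $\mathcal F(M)$ is the closed linear span of $\delta(M)$ in $\mathrm{Lip}_0(M)^*$. $\mathrm{lip}_0(M)=\{f\in\mathrm{Lip}_0(M): \lim_{\varepsilon\to0}\sup_{0<d(x,y)<\varepsilon}|f(x)-f(y)|/d(x,y)=0\}$; it is $1$-norming if $\|\mu\|=\sup\{\langle f,\mu\rangle: f\in\mathrm{lip}_0(M),\|f\|_L\le1\}$ for every $\mu\in\mathcal F(M)$. For a dual space $X^*$ of a separable Banach space $X$, the modulus of weak$^*$-asymptotic uniform convexity is $\overline\delta^*_{X^*}(t)=\inf_{x^*\in S_{X^*}}\inf\{\liminf_n\|x^*+x_n^*\|-1: (x_n^* )\subset X^*\ \text{weak}^*\text{-null},\ \|x_n^*\|\ge t\}$, and $X^*$ is weak$^*$-asymptotically uniformly convex if $\overline\delta^*_{X^*}(t)>0$ for every $t>0$. *)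

From HB Require Import structures.
From mathcomp Require Import all_boot all_order all_algebra.
From mathcomp Require Import all_classical all_reals all_analysis.
Set Implicit Arguments. Unset Strict Implicit. Unset Printing Implicit Defensive.
Import Order.TTheory GRing.Theory Num.Theory.
Import numFieldNormedType.Exports.
Local Open Scope classical_set_scope.
Local Open Scope ring_scope.

Section Defs.
Context {R : realType} {T : Type}.
Variables (d : T -> T -> R) (x0 : T).

Definition is_metric : Prop :=
  [/\ (forall x y, 0 <= d x y), (forall x y, d x y = 0 <-> x = y),
      (forall x y, d x y = d y x) & (forall x y z, d x z <= d x y + d y z)].

Definition mopen (U : set T) : Prop :=
  forall x, U x -> exists2 r, 0 < r & forall y, d x y < r -> U y.

Definition metric_compact : Prop :=
  forall (I : Type) (U : I -> set T), (forall i, mopen (U i)) ->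
    (forall x, exists i, U i x) ->
    exists (n : nat) (g : 'I_n -> I), forall x, exists j, U (g j) x.

Definition is_lip (f : T -> R) : Prop :=
  exists L : R, forall x y, `|f x - f y| <= L * d x y.

Definition Lip0 (f : T -> R) : Prop := is_lip f /\ f x0 = 0.

Definition lipn (f : T -> R) : R :=
  sup [set z | exists x y, x <> y /\ z = `|f x - f y| / d x y].

Definition lip0 (f : T -> R) : Prop :=
  Lip0 f /\ forall e : R, 0 < e -> exists2 del : R, 0 < del &
    forall x y, 0 < d x y -> d x y < del -> `|f x - f y| <= e * d x y.

(* elements of Lip_0(M)^* are represented as functionals on T -> R,
   only their values on Lip_0(M) matter *)
Definition dual_elem (mu : (T -> R) -> R) : Prop :=
  (forall (a : R) f g, Lip0 f -> Lip0 g ->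
     mu (fun x => a * f x + g x) = a * mu f + mu g) /\
  exists C : R, forall f, Lip0 f -> `|mu f| <= C * lipn f.

Definition dnorm (mu : (T -> R) -> R) : R :=
  sup [set z | exists f, [/\ Lip0 f, lipn f <= 1 & z = mu f]].

(* F(M): closed linear span of delta(M) in Lip_0(M)^* *)
Definition free_elem (mu : (T -> R) -> R) : Prop :=
  dual_elem mu /\ forall e : R, 0 < e ->
    exists (n : nat) (a : 'I_n -> R) (x : 'I_n -> T),
      dnorm (fun f => mu f - \sum_(i < n) a i * f (x i)) <= e.

Definition lip0_one_norming : Prop :=
  forall mu, free_elem mu ->
    dnorm mu = sup [set z | exists f, [/\ lip0 f, lipn f <= 1 & z = mu f]].

Definition wstar_null (m : nat -> (T -> R) -> R) : Prop :=
  (forall n, free_elem (m n)) /\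
  forall f, lip0 f -> (fun n => m n f) @ \oo --> (0 : R).

Definition wAUC_modulus (t : R) : \bar R :=
  ereal_inf [set ereal_inf
      [set (limn_einf (fun n => (dnorm (fun f => mu f + m n f))%:E) - 1%:E)%E
        | m in [set m | wstar_null m /\ forall n, t <= dnorm (m n)]]
    | mu in [set mu | free_elem mu /\ dnorm mu = 1]].

Definition wstar_AUC : Prop := forall t : R, 0 < t -> (0 < wAUC_modulus t)%E.

End Defs.

From HB Require Import structures.
From mathcomp Require Import all_boot all_order all_algebra.
From mathcomp Require Import all_classical all_reals all_analysis.
From mathcomp Require Import ring lra.
(* Fix mu of norm 1 in F(M) and a weak*-null sequence (m_n) with ||m_n|| >= t.
   Pick a little-Lipschitz f in the unit ball of lip_0(M) with mu(f) close to 1.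
   By compactness of M the unit ball of lip_0(M) is totally bounded for the sup
   norm, so m_n tends to 0 simultaneously on a finite sup-net (phi_i) of it.  For
   large n choose g in that ball with m_n(g) close to ||m_n|| and phi_i uniformly
   close to g.  Because f is little-Lipschitz, adding the uniformly small,
   1-Lipschitz function (g - phi_i)/2 to f raises the Lipschitz constant only
   slightly; and mu, being approximable by finitely supported measures, is small
   on uniformly small functions of the unit ball.  Testing mu + m_n against
   f + (g - phi_i)/2 then gives ||mu + m_n|| >= 1 + t/4 for all large n. *)

Set Implicit Arguments. Unset Strict Implicit. Unset Printing Implicit Defensive.
Import Order.TTheory GRing.Theory Num.Theory.
Local Open Scope classical_set_scope.
Local Open Scope ring_scope.

Lemma fiber_representatives (A I : Type) (B : set A) (b0 : A) (key : A -> I) :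
  B b0 -> exists rep : I -> A,
    (forall i, B (rep i)) /\ forall a, B a -> key (rep (key a)) = key a.
Proof.
move=> Bb0; pose fiber i := exists a, B a /\ key a = i.
exists (fun i => if pselect (fiber i) is left h then proj1_sig (cid h) else b0).
split=> [i|a Ba]; first by case: pselect => // h; case: (cid h) => ? [].
by case: pselect => [h|[]]; [case: (cid h) => ? [] | exists a].
Qed.

Lemma truncn_eq_dist (R : archiRealDomainType) (u v : R) : 0 <= u -> 0 <= v ->
  Num.truncn u = Num.truncn v -> `|u - v| < 1.
Proof.
move=> /truncn_itv/andP[u1 u2] /truncn_itv/andP[v1 v2] uv.
rewrite uv -natr1 in u1 u2; rewrite -natr1 in v2.
by rewrite ltr_norml; apply/andP; split; lra.
Qed.

(* Meaningful only for [a] in [[-D, D]]: [inord] sends larger indices to 0. *)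
Definition grid_cell (R : archiRealFieldType) (D eta a : R) :
  'I_(Num.truncn (2 * D / eta)).+1 :=
  inord (Num.truncn ((a + D) / eta)).

Lemma grid_cell_dist (R : archiRealFieldType) (D eta a b : R) : 0 < eta ->
  `|a| <= D -> `|b| <= D -> grid_cell D eta a = grid_cell D eta b -> `|a - b| < eta.
Proof.
move=> eta0; rewrite !ler_norml => /andP[a1 a2] /andP[b1 b2].
have cellK c : - D <= c <= D ->
    (Num.truncn ((c + D) / eta) < (Num.truncn (2 * D / eta)).+1)%N.
  by move=> /andP[c1 c2]; rewrite ltnS le_truncn // ler_pM2r ?invr_gt0 //; lra.
move=> /(congr1 val); rewrite /= !inordK ?cellK ?a1 ?b1 // => /truncn_eq_dist.
have -> : a - b = ((a + D) / eta - (b + D) / eta) * eta by field; rewrite gt_eqF.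
rewrite normrM (gtr0_norm eta0) gtr_pMl //; apply; apply: divr_ge0; lra.
Qed.

Section LipschitzFreeSpace.
Context {R : realType} {T : Type}.
Variables (d : T -> T -> R) (x0 : T).
Hypothesis hd : is_metric d.

Lemma metric_xx x : d x x = 0.
Proof. by case: hd => _ dE _ _; apply/dE. Qed.

Lemma metric_gt0 x y : x <> y -> 0 < d x y.
Proof.
case: hd => d0 dE _ _ nxy; rewrite lt_neqAle d0 andbT eq_sym.
by apply/eqP => /dE.
Qed.

Let slopes (f : T -> R) := [set z | exists x y, x <> y /\ z = `|f x - f y| / d x y].

Let slopes_ubound f L :
  (forall x y, `|f x - f y| <= L * d x y) -> ubound (slopes f) L.
Proof.
by move=> hL _ [x [y [nxy ->]]]; rewrite ler_pdivrMr ?metric_gt0 // hL.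
Qed.

Lemma lipn_le f L : 0 <= L -> (forall x y, `|f x - f y| <= L * d x y) ->
  lipn d f <= L.
Proof.
move=> L0 hL; have [E|/eqP/set0P ne] := pselect (slopes f = set0).
  by rewrite /lipn -/(slopes f) E sup0.
exact: ge_sup ne (slopes_ubound hL).
Qed.

Lemma lipn_ge0 f : is_lip d f -> 0 <= lipn d f.
Proof.
move=> [L hL]; have [E|/eqP/set0P [_ [x [y [nxy _]]]]] := pselect (slopes f = set0).
  by rewrite /lipn -/(slopes f) E sup0.
apply: le_trans (ub_le_sup (ex_intro _ L (slopes_ubound hL)) _); last by exists x, y.
by rewrite divr_ge0 // ltW // metric_gt0.
Qed.

Lemma lipn_dist f : is_lip d f -> forall x y, `|f x - f y| <= lipn d f * d x y.
Proof.
move=> [L hL] x y; have [->|nxy] := pselect (x = y).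
  by rewrite subrr normr0 metric_xx mulr0.
rewrite -ler_pdivrMr ?metric_gt0 //.
by apply: (ub_le_sup (ex_intro _ L (slopes_ubound hL))); exists x, y.
Qed.

Lemma lipn1_dist f : is_lip d f -> lipn d f <= 1 ->
  forall x y, `|f x - f y| <= d x y.
Proof.
case: hd => d0 _ _ _ hf hl x y.
by apply: le_trans (lipn_dist hf x y) _; rewrite ler_piMl.
Qed.

Lemma lipn_cst0 : lipn d (fun _ => 0) = 0.
Proof.
have h0 x y : `|(0 : R) - 0| <= 0 * d x y by rewrite subrr normr0 mul0r.
by apply/eqP; rewrite eq_le lipn_le // lipn_ge0 //; exists 0.
Qed.

Lemma Lip0_lincomb a f g : Lip0 d x0 f -> Lip0 d x0 g ->
  Lip0 d x0 (fun x => a * f x + g x).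
Proof.
move=> [[Lf hf] f0] [[Lg hg] g0].
split; last by rewrite f0 g0 mulr0 addr0.
exists (`|a| * Lf + Lg) => x y.
rewrite opprD addrACA -mulrBr mulrDl -mulrA.
apply: le_trans (ler_normD _ _) _; rewrite normrM lerD //.
exact: ler_wpM2l.
Qed.

Lemma Lip0_cst0 : Lip0 d x0 (fun _ => 0).
Proof. by split => //; exists 0 => x y; rewrite subrr normr0 mul0r. Qed.

Lemma lip0_cst0 : lip0 d x0 (fun _ => 0).
Proof.
split; first exact: Lip0_cst0.
case: hd => d0 _ _ _ e e0; exists 1 => // x y _ _.
by rewrite subrr normr0 mulr_ge0 // ltW.
Qed.

Lemma Lip0Z a f : Lip0 d x0 f -> Lip0 d x0 (fun x => a * f x).
Proof.
by move=> /(Lip0_lincomb a)/(_ Lip0_cst0); under eq_fun do rewrite addr0.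
Qed.

Section DualElement.
Variable mu : (T -> R) -> R.
Hypothesis hmu : dual_elem d x0 mu.

Lemma dual_elem0 : mu (fun _ => 0) = 0.
Proof.
have := hmu.1 1 _ _ Lip0_cst0 Lip0_cst0.
under eq_fun do rewrite mul1r addr0.
by rewrite mul1r => h; lra.
Qed.

Lemma dual_elemZ a f : Lip0 d x0 f -> mu (fun x => a * f x) = a * mu f.
Proof.
move=> hf; have := hmu.1 a _ _ hf Lip0_cst0.
by under eq_fun do rewrite addr0; rewrite dual_elem0 addr0.
Qed.

Lemma dual_elem_lincomb a b f g : Lip0 d x0 f -> Lip0 d x0 g ->
  mu (fun x => a * f x + b * g x) = a * mu f + b * mu g.
Proof. by move=> hf hg; rewrite hmu.1 ?dual_elemZ //; exact: Lip0Z. Qed.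

Lemma le_dnorm h : Lip0 d x0 h -> lipn d h <= 1 -> mu h <= dnorm d x0 mu.
Proof.
case: hmu => _ [C hC] hh hl; apply: ub_le_sup; last by exists h.
exists `|C| => _ [f [hf hfl ->]].
apply: le_trans (ler_norm _) (le_trans (hC f hf) _).
have := lipn_ge0 hf.1; have := ler_norm C; have := normr_ge0 C; nra.
Qed.

End DualElement.

Lemma dual_elemD mu nu : dual_elem d x0 mu -> dual_elem d x0 nu ->
  dual_elem d x0 (fun f => mu f + nu f).
Proof.
move=> [mul [C1 hC1]] [nul [C2 hC2]]; split.
  by move=> a f g hf hg; rewrite mul // nul // mulrDr addrACA.
exists (C1 + C2) => f hf; rewrite mulrDl.
exact: le_trans (ler_normD _ _) (lerD (hC1 f hf) (hC2 f hf)).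
Qed.

Lemma dual_elemN mu : dual_elem d x0 mu -> dual_elem d x0 (fun f => - mu f).
Proof.
move=> [mul [C hC]]; split; last by exists C => f hf; rewrite normrN hC.
by move=> a f g hf hg; rewrite mul // opprD mulrN.
Qed.

Lemma dual_elem_sum_delta n (a : 'I_n -> R) (x : 'I_n -> T) :
  dual_elem d x0 (fun f => \sum_(i < n) a i * f (x i)).
Proof.
split.
  move=> c f g _ _; rewrite mulr_sumr -big_split /=.
  by apply: eq_bigr => i _; rewrite mulrDr mulrCA.
exists (\sum_(i < n) `|a i| * d (x i) x0) => f [hf f0].
rewrite mulr_suml; apply: le_trans (ler_norm_sum _ _ _) (ler_sum _ _) => i _.
by rewrite normrM -mulrA ler_wpM2l // -[f (x i)]subr0 -f0 mulrC lipn_dist.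
Qed.

Lemma lip0_norming_approx mu (e : R) : lip0_one_norming d x0 ->
  free_elem d x0 mu -> 0 < e ->
  exists f, [/\ lip0 d x0 f, lipn d f <= 1 & dnorm d x0 mu - e < mu f].
Proof.
move=> hn hmu e0; rewrite (hn _ hmu).
have hs : has_sup [set z | exists f, [/\ lip0 d x0 f, lipn d f <= 1 & z = mu f]].
  split; first by exists (mu (fun _ => 0)), (fun _ => 0); rewrite lipn_cst0 ler01;
    split=> //; exact: lip0_cst0.
  exists (dnorm d x0 mu) => _ [f [hf hfl ->]].
  exact: le_dnorm hmu.1 _ hf.1 hfl.
by have [_ [f [hf hfl ->]] lt_f] := sup_adherent e0 hs; exists f.
Qed.

Lemma free_elem_small_on_unif_small mu (e : R) : free_elem d x0 mu -> 0 < e ->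
  exists2 r, 0 < r & forall psi, Lip0 d x0 psi -> lipn d psi <= 1 ->
    (forall x, `|psi x| <= r) -> `|mu psi| <= e.
Proof.
move=> [hmu happrox] e0.
have [n [a [x hnu]]] := happrox (e / 2) ltac:(by rewrite divr_gt0).
pose A := \sum_(i < n) `|a i|.
have A0 : 0 <= A by exact: sumr_ge0.
pose r := e / (2 * (A + 1)).
have r0 : 0 < r by rewrite divr_gt0 // mulr_gt0 //; lra.
have Ar : A * r <= e / 2.
  have -> : e / 2 = (A + 1) * r by rewrite /r; field; lra.
  by rewrite ler_wpM2r //; [exact: ltW | lra].
have mu_le : forall psi, Lip0 d x0 psi -> lipn d psi <= 1 ->
    (forall x, `|psi x| <= r) -> mu psi <= e.
  move=> psi hpsi hl hr.
  have := le_dnorm (dual_elemD hmu (dual_elemN (dual_elem_sum_delta a x))) hpsi hl.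
  move=> /le_trans/(_ hnu).
  have : `|\sum_(i < n) a i * psi (x i)| <= A * r.
    rewrite /A mulr_suml.
    apply: le_trans (ler_norm_sum _ _ _) (ler_sum _ _) => i _.
    by rewrite normrM ler_wpM2l.
  rewrite ler_norml => /andP[? ?] ?; lra.
exists r => // psi hpsi hl hr; rewrite ler_norml mu_le // andbT.
have := mu_le (fun x => -1 * psi x) (Lip0Z (-1) hpsi).
rewrite (dual_elemZ hmu) // mulN1r lerNl; apply.
  apply: lipn_le => // y z; rewrite -mulrBr normrM normrN1 !mul1r.
  exact: lipn1_dist hpsi.1 hl y z.
by move=> y; rewrite mulN1r normrN.
Qed.

Lemma little_lip_add_small (f psi : T -> R) (e del r : R) :
  0 <= e -> 2 * r <= e * del -> (forall x y, `|f x - f y| <= d x y) ->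
  (forall x y, 0 < d x y -> d x y < del -> `|f x - f y| <= e * d x y) ->
  (forall x y, `|psi x - psi y| <= d x y) -> (forall x, `|psi x| <= r) ->
  forall x y, `|(f x + psi x) - (f y + psi y)| <= (1 + e) * d x y.
Proof.
move=> e0 rdel f1 f_small psi1 psir x y.
have [->|nxy] := pselect (x = y); first by rewrite subrr normr0 metric_xx mulr0.
have dxy := metric_gt0 nxy.
rewrite opprD addrACA mulrDl mul1r; apply: le_trans (ler_normD _ _) _.
have [lt_del|ge_del] := ltP (d x y) del.
  by rewrite [leRHS]addrC; apply: lerD; [exact: f_small | exact: psi1].
apply: lerD; first exact: f1.
apply: le_trans (ler_normB _ _) _.
apply: le_trans (_ : 2 * r <= _); first by have := psir x; have := psir y; lra.
by apply: le_trans rdel _; rewrite ler_wpM2l.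
Qed.

Lemma le_dnorm_little_lip_add mu f psi (e del r : R) : dual_elem d x0 mu ->
  0 < e -> 2 * r <= e * del -> Lip0 d x0 f -> lipn d f <= 1 ->
  (forall x y, 0 < d x y -> d x y < del -> `|f x - f y| <= e * d x y) ->
  Lip0 d x0 psi -> lipn d psi <= 1 -> (forall x, `|psi x| <= r) ->
  mu f + mu psi <= (1 + e) * dnorm d x0 mu.
Proof.
move=> hmu e0 rdel hf fl f_small hpsi psil psir.
have e1 : 0 < 1 + e by lra.
pose c := (1 + e)^-1.
have hh : Lip0 d x0 (fun x => c * f x + c * psi x).
  exact: Lip0_lincomb hf (Lip0Z c hpsi).
have := le_dnorm hmu hh.
rewrite (dual_elem_lincomb hmu) // -mulrDr ler_pdivrMl //.
apply; apply: lipn_le => // x y.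
rewrite -!mulrDr -mulrBr normrM gtr0_norm ?invr_gt0 // ler_pdivrMl // mul1r.
apply: (little_lip_add_small (ltW e0) rdel _ f_small _ psir).
- exact: lipn1_dist hf.1 fl.
- exact: lipn1_dist hpsi.1 psil.
Qed.

Lemma metric_compact_finite_net (eta : R) : metric_compact d -> 0 < eta ->
  exists (p : nat) (ys : 'I_p -> T), forall x, exists j, d (ys j) x < eta.
Proof.
case: hd => _ _ _ tri hc eta0.
have [|x|p [ys hys]] := hc T (fun y => [set x | d y x < eta]); last by exists p, ys.
- move=> y x /= hx; exists (eta - d y x); first by rewrite subr_gt0.
  by move=> z hz; apply: le_lt_trans (tri y x z) _; rewrite -ltrBrDl.
- by exists x; rewrite /= metric_xx.
Qed.

Lemma lip1_finite_sup_net (B : set (T -> R)) b0 (s : R) : metric_compact d ->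
  0 < s -> B b0 ->
  (forall g, B g -> g x0 = 0 /\ forall x y, `|g x - g y| <= d x y) ->
  exists (I : finType) (rep : I -> T -> R),
    (forall i, B (rep i)) /\
    forall g, B g -> exists i, forall x, `|g x - rep i x| <= s.
Proof.
move=> hc s0 Bb0 hB; pose eta := s / 3.
have eta0 : 0 < eta by rewrite divr_gt0.
have [p [ys hys]] := metric_compact_finite_net hc eta0.
pose D := \sum_(j < p) d (ys j) x0.
have gD g j : B g -> `|g (ys j)| <= D.
  move=> /hB[g0 g1]; rewrite -[g (ys j)]subr0 -g0; apply: le_trans (g1 _ _) _.
  by rewrite /D (bigD1 j) //= lerDl sumr_ge0 // => i _; case: hd.
pose key g : {ffun 'I_p -> _} := [ffun j => grid_cell D eta (g (ys j))].
have [rep [Brep repK]] := fiber_representatives key Bb0.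
exists {ffun 'I_p -> _}, rep; split=> // g Bg; exists (key g) => x.
have [j xj] := hys x; have [_ g1] := hB _ Bg; have [_ r1] := hB _ (Brep (key g)).
have : `|g (ys j) - rep (key g) (ys j)| < eta.
  apply: grid_cell_dist eta0 (gD _ _ Bg) (gD _ _ (Brep _)) _.
  by have := congr1 (fun F : {ffun _ -> _} => F j) (repK _ Bg); rewrite !ffunE.
have := g1 x (ys j); have := r1 (ys j) x; case: hd => _ _ /(_ x (ys j)) -> _.
have s3 : s = 3 * eta by rewrite /eta mulrC divfK.
rewrite !ler_norml ltr_norml => /andP[? ?] /andP[? ?] /andP[? ?].
by apply/andP; split; lra.
Qed.

Lemma wstar_null_small_on_ball_net m (s e : R) : metric_compact d ->
  wstar_null d x0 m -> 0 < s -> 0 < e ->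
  \forall n \near \oo, forall g, lip0 d x0 g -> lipn d g <= 1 ->
    exists phi, [/\ lip0 d x0 phi, lipn d phi <= 1,
                    forall x, `|g x - phi x| <= s & `|m n phi| < e].
Proof.
move=> hc [_ m_null] s0 e0.
pose B := [set g | lip0 d x0 g /\ lipn d g <= 1].
have [I [rep [Brep rep_close]]] : exists (I : finType) (rep : I -> T -> R),
    (forall i, B (rep i)) /\
    forall g, B g -> exists i, forall x, `|g x - rep i x| <= s.
  apply: (lip1_finite_sup_net hc s0 (b0 := fun _ => 0)).
    by split; [exact: lip0_cst0 | rewrite lipn_cst0].
  by move=> g [[[lg g0] _] gl]; split=> //; exact: lipn1_dist lg gl.
near=> n => g lg gl.
have mrep : forall i, `|m n (rep i)| < e.
  near: n; apply: filter_forall => i.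
  exact: cvgr0_norm_lt (m_null _ (Brep i).1) _ e0.
have [i gi] := rep_close g (conj lg gl).
by have [? ?] := Brep i; exists (rep i).
Unshelve. all: by end_near.
Qed.

Lemma Lip0_half_diff g phi (s : R) : Lip0 d x0 g -> lipn d g <= 1 ->
  Lip0 d x0 phi -> lipn d phi <= 1 -> (forall x, `|g x - phi x| <= s) ->
  [/\ Lip0 d x0 (fun x => 2^-1 * g x + (- 2^-1) * phi x),
      lipn d (fun x => 2^-1 * g x + (- 2^-1) * phi x) <= 1 &
      forall x, `|2^-1 * g x + (- 2^-1) * phi x| <= s / 2].
Proof.
move=> hg gl hphi phil gs; split.
- exact: Lip0_lincomb _ hg (Lip0Z _ hphi).
- apply: lipn_le => // x y.
  have := lipn1_dist hg.1 gl x y; have := lipn1_dist hphi.1 phil x y.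
  rewrite !ler_norml => /andP[? ?] /andP[? ?]; apply/andP; split; lra.
- move=> x; have := gs x; rewrite !ler_norml => /andP[? ?].
  by apply/andP; split; lra.
Qed.

Lemma dnorm_add_wstar_null_ge mu m (t : R) : metric_compact d ->
  lip0_one_norming d x0 -> 0 < t -> free_elem d x0 mu -> dnorm d x0 mu = 1 ->
  wstar_null d x0 m -> (forall n, t <= dnorm d x0 (m n)) ->
  \forall n \near \oo, 1 + t / 4 <= dnorm d x0 (fun f => mu f + m n f).
Proof.
move=> hc hn t0 hmu mu1 hm mt.
(* [e] solves 1 + t/2 - 4 e = (1 + e) (1 + t/4). *)
pose e := t / (20 + t).
have e0 : 0 < e by rewrite divr_gt0 //; lra.
have te : t = e * (20 + t) by rewrite /e divfK //; lra.
have [f [lf fl muf]] := lip0_norming_approx hn hmu e0.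
have [del del0 f_small] := lf.2 e e0.
have [r r0 mu_small] := free_elem_small_on_unif_small hmu e0.
pose s := Num.min (2 * r) (e * del).
have s0 : 0 < s by rewrite /s lt_min; apply/andP; split; apply: mulr_gt0.
have s2r : s / 2 <= r.
  have : s <= 2 * r by rewrite /s ge_min lexx.
  lra.
have sdel : 2 * (s / 2) <= e * del.
  have : s <= e * del by rewrite /s ge_min lexx orbT.
  lra.
near=> n.
have mf : `|m n f| < e by near: n; exact: cvgr0_norm_lt (hm.2 _ lf) _ e0.
have net : forall g, lip0 d x0 g -> lipn d g <= 1 -> exists phi, [/\ lip0 d x0 phi,
    lipn d phi <= 1, forall x, `|g x - phi x| <= s & `|m n phi| < e].
  by near: n; exact: wstar_null_small_on_ball_net.
have [g [lg gl mg]] := lip0_norming_approx hn (hm.1 n) e0.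
have [phi [lphi phil gphi mphi]] := net g lg gl.
have [Lpsi psil psir] := Lip0_half_diff lg.1 gl lphi.1 phil gphi.
have := le_dnorm_little_lip_add (dual_elemD hmu.1 (hm.1 n).1) e0 sdel lf.1 fl
  f_small Lpsi psil psir.
rewrite (dual_elem_lincomb (hm.1 n).1 _ _ lg.1 lphi.1).
have := mu_small _ Lpsi psil (fun x => le_trans (psir x) s2r).
have := mt n; rewrite mu1 in muf.
move: mf mphi; rewrite !ltr_norml ler_norml.
move=> /andP[? ?] /andP[? ?] ? /andP[? ?] ?.
rewrite -(ler_pM2l (_ : 0 < 1 + e)); last by lra.
lra.
Unshelve. all: by end_near.
Qed.

End LipschitzFreeSpace.

Lemma limn_einf_ge_near (R : realType) (u : (\bar R)^nat) (c : \bar R) :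
  (\forall n \near \oo, (c <= u n)%E) -> (c <= limn_einf u)%E.
Proof.
move=> [N _ hN]; rewrite limn_einf_lim; apply: lime_ge; first exact: is_cvg_einfs.
exists N => // n /= Nn; apply: le_ereal_inf_tmp => _ [k /= nk <-].
exact: hN (leq_trans Nn nk).
Qed.

Theorem proposition6p1 (R : realType) (T : Type) (d : T -> T -> R) (x0 : T)
  (hd : is_metric d) (hcpt : metric_compact d)
  (hnorm : lip0_one_norming d x0) :
  wstar_AUC d x0.
Proof.
move=> t t0; apply: (@lt_le_trans _ _ (t / 4)%:E); first by rewrite lte_fin divr_gt0.
apply: le_ereal_inf_tmp => _ [mu [hmu mu1] <-].
apply: le_ereal_inf_tmp => _ [m [hm mt] <-].
rewrite leeBrDr // addrC; apply: limn_einf_ge_near.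
by apply: filterS (dnorm_add_wstar_null_ge hd hcpt hnorm t0 hmu mu1 hm mt) => n.
Qed.
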